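(* The numbers $D_2(\boldsymbol m)$, $\boldsymbol m\in\mathscr F$, defined by $D_2(\boldsymbol 0):=1$ and $D_2(\boldsymbol m):=\sum_{\mathfrak u\subseteq{\rm supp}(\boldsymbol m),\,0\ne|\mathfrak u|\le2}D_2(\boldsymbol m-\boldsymbol e_{\mathfrak u})$ for $\boldsymbol m\ne\boldsymbol 0$ (with $\boldsymbol e_{\mathfrak u}=\sum_{j\in\mathfrak u}\boldsymbol e_j$), satisfy $$D_2(\boldsymbol m)\le|\boldsymbol m|!\,a_{|\boldsymbol m|}\quad\text{for all }\boldsymbol m\in\mathscr F,\qquad a_k:=\frac{(1+\sqrt3)^{k+1}-(1-\sqrt3)^{k+1}}{2^{k+1}\sqrt3},\ k\ge0.$$
   Context: $\mathscr F$ is the set of finitely supported multi-indices in $\mathbb N_0^{\mathbb N}$; ${\rm supp}(\boldsymbol m)=\{j:m_j\ne0\}$, $|\boldsymbol m|=\sum m_j$, $\boldsymbol e_j$ the $j$th unit multi-index. *)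

From HB Require Import structures.
From mathcomp Require Import all_boot all_order all_algebra.
From mathcomp Require Import reals.
Set Implicit Arguments. Unset Strict Implicit. Unset Printing Implicit Defensive.
Import Order.TTheory GRing.Theory Num.Theory.

(* A finitely supported multi-index m in F is represented by a finite
   sequence s : seq nat, with m_j = nth 0 s j (m_j = 0 for j >= size s).
   Every element of F has such a representation (trailing zeros irrelevant). *)

Definition mabs (m : seq nat) : nat := sumn m.

Definition msupp (m : seq nat) : {set 'I_(size m)} :=
  [set j : 'I_(size m) | nth 0%N m j != 0%N].

Definition msub (m : seq nat) (u : {set 'I_(size m)}) : seq nat :=
  [seq (nth 0%N m (val j) - (j \in u))%N | j <- enum 'I_(size m)].

(* D_2 computed with fuel; each recursive step lowers |m| by at least 1,
   so fuel |m| suffices (at fuel 0 we have |m| = 0, i.e. m = 0). *)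
Fixpoint D2f (fuel : nat) (m : seq nat) : nat :=
  match fuel with
  | 0 => 1%N
  | k.+1 =>
    if mabs m == 0%N then 1%N
    else (\sum_(u : {set 'I_(size m)} |
                 (u \subset msupp m) && (0 < #|u| <= 2)%N) D2f k (msub u))%N
  end.

Definition D2 (m : seq nat) : nat := D2f (mabs m) m.

Local Open Scope ring_scope.

Definition aseq (R : realType) (k : nat) : R :=
  ((1 + Num.sqrt 3) ^+ k.+1 - (1 - Num.sqrt 3) ^+ k.+1)
    / (2 ^+ k.+1 * Num.sqrt 3).

From HB Require Import structures.
From mathcomp Require Import all_boot all_order all_algebra.
From mathcomp Require Import reals ring.
Set Implicit Arguments. Unset Strict Implicit. Unset Printing Implicit Defensive.
Import Order.TTheory GRing.Theory Num.Theory.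

(* Every recursive step of D_2 removes one or two units from |m|, and supp(m)
   has at most |m| elements, so D_2(m) <= c_{|m|} for the integer sequence
   c_0 = c_1 = 1, c_{n+1} = (n+1) c_n + C(n+1, 2) c_{n-1}.  Dividing by
   (n+1)! gives a_{n+1} = a_n + a_{n-1} / 2, whose characteristic roots are
   (1 +- sqrt 3) / 2; the closed form a_n has the initial values a_0 = a_1 = 1. *)

(* D2max n is the value of D_2 at the multi-index (1, ..., 1) of length n. *)
Fixpoint D2max (n : nat) : nat :=
  match n with
  | 0 | 1 => 1
  | (k.+1 as p).+1 => p.+1 * D2max p + 'C(p.+1, 2) * D2max k
  end.

Lemma D2maxS n : D2max n.+1 = n.+1 * D2max n + 'C(n.+1, 2) * D2max n.-1.
Proof. by case: n. Qed.

Lemma D2max_gt0 n : 0 < D2max n.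
Proof. by elim: n => // n IHn; rewrite D2maxS addn_gt0 muln_gt0 IHn. Qed.

Lemma sum_subsets_card12 (T : finType) (S : {set T}) (F : nat -> nat) :
  \sum_(u : {set T} | (u \subset S) && (0 < #|u| <= 2)) F #|u| =
  #|S| * F 1 + 'C(#|S|, 2) * F 2.
Proof.
have card12 (u : {set T}) : (0 < #|u| <= 2) = (#|u| == 1) || (#|u| == 2).
  by case: #|u| => [|[|[]]].
rewrite (bigID (fun u : {set T} => #|u| == 1)) /= -{1}(bin1 #|S|).
rewrite -!cards_draws -!sum_nat_const; congr (_ + _); apply: eq_big => u.
- by rewrite inE card12; case: eqP; rewrite ?andbT ?andbF.
- by case/andP=> _ /eqP ->.
- by rewrite inE card12; case: eqP => [->|_]; rewrite ?andbF ?andbT.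
- by rewrite card12 => /andP[/andP[_ /orP[] /eqP ->]].
Qed.

Lemma sumn_nth (m : seq nat) : sumn m = \sum_(j < size m) nth 0 m j.
Proof. by rewrite sumnE (big_nth 0) big_mkord. Qed.

Lemma card_msupp (m : seq nat) : #|msupp m| <= mabs m.
Proof.
rewrite /mabs sumn_nth -sum1_card big_mkcond /=; apply: leq_sum => j _.
by rewrite inE; case: ifP; rewrite ?lt0n.
Qed.

Lemma mabs_msub (m : seq nat) (u : {set 'I_(size m)}) :
  u \subset msupp m -> mabs (msub u) = mabs m - #|u|.
Proof.
move=> sub_um; rewrite /mabs /msub sumnE big_map big_enum /= sumn_nth.
rewrite -sum1_card [X in _ = X - _](eq_bigr
  (fun j : 'I_(size m) => nth 0 m j - (j \in u) + (if j \in u then 1 else 0))).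
  by rewrite big_split /= -big_mkcond addnK.
move=> j _; case: ifP => [uj|_]; last by rewrite subn0 addn0.
by have := subsetP sub_um j uj; rewrite inE -lt0n => /subnK.
Qed.

Lemma D2f_le_D2max k m : D2f k m <= D2max (mabs m).
Proof.
elim: k m => [|k IHk] m /=; first exact: D2max_gt0.
case: eqP => [-> // | /eqP m_neq0].
apply: (@leq_trans (\sum_(u : {set 'I_(size m)} |
    (u \subset msupp m) && (0 < #|u| <= 2)) D2max (mabs m - #|u|))).
  by apply: leq_sum => u /andP[sub_um _]; rewrite -mabs_msub.
rewrite (sum_subsets_card12 _ (fun i => D2max (mabs m - i))).
move: (card_msupp m) m_neq0; case: (mabs m) => // n supp_le _.
rewrite D2maxS !subSS subn0 subn1.
by apply: leq_add; apply: leq_mul => //; apply: leq_bin2l.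
Qed.

Local Open Scope ring_scope.

Lemma expr_lin_rec (R : comPzRingType) (x p q : R) :
  x ^+ 2 = p * x + q -> forall n, x ^+ n.+2 = p * x ^+ n.+1 + q * x ^+ n.
Proof. by move=> x2 n; rewrite -addn2 exprD x2 exprSr; ring. Qed.

Lemma sqr_1plus_sqrt3 (R : comPzRingType) (x : R) :
  x ^+ 2 = 3 -> (1 + x) ^+ 2 = 2 * (1 + x) + 2.
Proof. by move=> x2; rewrite sqrrD x2; ring. Qed.

Lemma sqrt3_sqr (R : rcfType) : Num.sqrt (3 : R) ^+ 2 = 3.
Proof. by rewrite sqr_sqrtr // ler0n. Qed.

Lemma sqrt3_neq0 (R : rcfType) : Num.sqrt (3 : R) != 0.
Proof. by rewrite sqrtr_eq0 -ltNge ltr0n. Qed.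

Lemma aseq0 (R : realType) : aseq R 0 = 1.
Proof. by rewrite /aseq !expr1; field; rewrite sqrt3_neq0. Qed.

Lemma aseq1 (R : realType) : aseq R 1 = 1.
Proof. by rewrite /aseq; field; rewrite sqrt3_neq0. Qed.

Lemma aseqSS (R : realType) k : aseq R k.+2 = aseq R k.+1 + aseq R k / 2.
Proof.
have sqrtN3_sqr : (- Num.sqrt (3 : R)) ^+ 2 = 3 by rewrite sqrrN sqrt3_sqr.
rewrite /aseq (expr_lin_rec (sqr_1plus_sqrt3 (sqrt3_sqr R))).
rewrite (expr_lin_rec (sqr_1plus_sqrt3 sqrtN3_sqr)) !exprS.
by field; rewrite sqrt3_neq0 expf_neq0 ?pnatr_eq0.
Qed.

Lemma D2max_aseq (R : realType) n : (D2max n)%:R = n`!%:R * aseq R n :> R.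
Proof.
suff [] : (D2max n)%:R = n`!%:R * aseq R n :> R /\
          (D2max n.+1)%:R = n.+1`!%:R * aseq R n.+1 :> R by [].
elim: n => [|k [IHk IHk1]]; first by rewrite aseq0 aseq1 !mulr1.
split=> //; rewrite D2maxS natrD !natrM IHk1 IHk aseqSS !factS !natrM.
have bin2E : 'C(k.+2, 2)%:R = (k.+2 * k.+1)%:R / 2 :> R.
  rewrite -[LHS](mulKf (_ : 2 != 0)) ?pnatr_eq0 // -natrM (mul_bin_left _ 1).
  by rewrite bin1 subn1 mulnC mulrC.
by rewrite bin2E natrM; field.
Qed.

Theorem lemmaA2 (R : realType) (m : seq nat) :
  ((D2 m)%:R : R) <= ((mabs m)`!)%:R * aseq R (mabs m).
Proof. by rewrite -D2max_aseq ler_nat; apply: D2f_le_D2max. Qed.
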